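(* Let $n,k$ be positive integers with $n \geq 3(n-k)$ and $n\geq k$, and let $C\in\mathcal{K}_k(n)$. Then there is no chord $c$ of $C$ such that both $s_c$ and $e_c$ lie in $M_{n,k}=\{k+1,k+2,\dots,2n-k\}$.
   Context: A linear chord diagram of size $n$ is a partition of $\{1,2,\dots,2n\}$ into blocks of size two, called chords. For a chord $c=\{s_c,e_c\}$ with $s_c<e_c$, $s_c$ is its start point, $e_c$ its end point, and its length is $e_c-s_c$. $\mathcal{K}_k(n)$ is the set of all linear chord diagrams of size $n$ in which every chord has length at least $k$. *)

From mathcomp Require Import all_boot all_order.
Set Implicit Arguments. Unset Strict Implicit. Unset Printing Implicit Defensive.

(* Points: the ordinal x : 'I_(2n) represents the point label x.+1 in {1,...,2n}. *)
Definition label (m : nat) (x : 'I_m) : nat := (nat_of_ord x).+1.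

Definition linear_chord_diagram (n : nat) (C : {set {set 'I_(2 * n)}}) : bool :=
  partition C [set: 'I_(2 * n)] && [forall c in C, #|c| == 2].

(* Start point s_c and end point e_c of a chord c: the points x < y of c.
   The length e_c - s_c of chord c is at least k. *)
Definition chord_length_ge (n k : nat) (c : {set 'I_(2 * n)}) : bool :=
  [forall x in c, forall y in c, (label x < label y) ==> (k <= label y - label x)].

Definition K (k n : nat) (C : {set {set 'I_(2 * n)}}) : bool :=
  linear_chord_diagram C && [forall c in C, chord_length_ge k c].

Definition inM (n k p : nat) : bool := (k.+1 <= p) && (p <= 2 * n - k).

From mathcomp Require Import all_boot all_order.
From mathcomp Require Import zify.

Set Implicit Arguments.
Unset Strict Implicit.
Unset Printing Implicit Defensive.

(* Two points of M_{n,k} = {k+1, ..., 2n-k} are at distance at most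
   2n - 2k - 1, which is less than k as soon as 2n <= 3k; so no chord of
   length at least k has both endpoints in M_{n,k}. *)

Lemma inM_dist_lt (n k p q : nat) :
  2 * n <= 3 * k -> inM n k p -> inM n k q -> q - p < k.
Proof. by rewrite /inM => ? /andP[? ?] /andP[? ?]; lia. Qed.

Lemma K_chord (n k : nat) (C : {set {set 'I_(2 * n)}}) (c : {set 'I_(2 * n)}) :
  K k C -> c \in C -> #|c| = 2 /\ chord_length_ge k c.
Proof.
case/andP=> /andP[_ /forall_inP card2] /forall_inP long cC.
by split; [apply/eqP/card2 | apply: long].
Qed.

Lemma chord_length_ge_pair (n k : nat) (c : {set 'I_(2 * n)}) :
  #|c| = 2 -> chord_length_ge k c ->
  exists x y, [/\ x \in c, y \in c & k <= label y - label x].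
Proof.
move=> /eqP/cards2P[x [y [xy ->]]] /forall_inP long.
have xc : x \in [set x; y] by rewrite !inE eqxx.
have yc : y \in [set x; y] by rewrite !inE eqxx orbT.
have /forall_inP long_x := long x xc; have /forall_inP long_y := long y yc.
have [lt_xy | lt_yx | eq_xy] := ltngtP x y.
- by exists x, y; split=> //; apply: implyP (long_x y yc) _; rewrite ltnS.
- by exists y, x; split=> //; apply: implyP (long_y x xc) _; rewrite ltnS.
- by rewrite (val_inj eq_xy) eqxx in xy.
Qed.

Theorem lemma1 (n k : nat) (C : {set {set 'I_(2 * n)}}) :
  0 < n -> 0 < k -> 3 * (n - k) <= n -> k <= n -> K k C ->
  ~ (exists2 c, c \in C & forall x, x \in c -> inM n k (label x)).
Proof.
move=> _ _ le_3nk le_kn KC [c cC cM].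
have [c2 long] := K_chord KC cC.
have [x [y [xc yc le_k]]] := chord_length_ge_pair c2 long.
have le_2n_3k : 2 * n <= 3 * k by lia.
have := inM_dist_lt le_2n_3k (cM x xc) (cM y yc).
by rewrite ltnNge le_k.
Qed.
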